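(* Given a Moore-Penrose dagger additive category $(\mathbb{X}, \dagger)$ and any object $X \in \mathbb{X}$, $\mathfrak{G}\left[ (\mathbb{X}, \dagger) \right]_X$ is a Markov category with conditionals. In particular, given a map $F= \left( \begin{bmatrix} f \\ g \end{bmatrix}, \begin{bmatrix} \alpha & \beta \\ \beta^\dagger & \delta \end{bmatrix}, \begin{bmatrix} s \\ t \end{bmatrix} \right): A \to B \otimes C$ in $\mathfrak{G}\left[ (\mathbb{X}, \dagger) \right]_X$, the map $F\vert_B: B \otimes A \to C$ defined as the triple: \begin{align*} F\vert_B = \left( \begin{bmatrix} \beta^\dagger \circ \alpha^\circ & g - \beta^\dagger \circ \alpha^\circ \circ f \end{bmatrix}, \delta - \beta^\dagger \circ \alpha^\circ \circ \beta, t - \beta^\dagger \circ \alpha^\circ \circ s \right) \end{align*} is a conditional of $F$.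
   Context: A dagger additive category $(\mathbb{X}, \dagger)$ is a dagger category enriched in abelian groups with additive dagger and finite biproducts satisfying $\pi_j^\dagger = \iota_j$; maps between biproducts are written as matrices and the dagger acts as conjugate transpose. A Moore-Penrose inverse of $f: A \to B$ is a map $f^\circ: B \to A$ with $f \circ f^\circ \circ f = f$, $f^\circ \circ f \circ f^\circ = f^\circ$, $(f \circ f^\circ)^\dagger = f \circ f^\circ$, $(f^\circ \circ f)^\dagger = f^\circ \circ f$; $(\mathbb{X},\dagger)$ is Moore-Penrose if every map has one. A map $p$ is $\dagger$-positive if $p = \phi^\dagger \circ \phi$ for some $\phi$. For an object $X$, the Gauss construction $\mathfrak{G}\left[ (\mathbb{X}, \dagger) \right]_X$ is the Markov category with the objects of $\mathbb{X}$, maps $A \to B$ the triples $(f,p,x)$ with $f: A \to B$, $p: B \to B$ $\dagger$-positive, $x: X \to B$; identities $\mathsf{Id}_A = (\mathsf{id}_A,0,0)$; composition $(g,q,y) \circ (f,p,x) = (g \circ f, q + g \circ p \circ g^\dagger, y + g \circ x)$; $A \otimes B = A \oplus B$, $(f,p,x) \otimes (g,q,y) = \left(f \oplus g, p \oplus q, \begin{bmatrix} x \\ y \end{bmatrix}\right)$, unit the zero object $\mathsf{0}$; copy $\mathsf{copy}_A = \left(\begin{bmatrix} \mathsf{id}_A \\ \mathsf{id}_A \end{bmatrix}, 0, 0\right)$, delete $\mathsf{del}_A = (0,0,0): A \to \mathsf{0}$. In $F$, $f: A \to B$, $g: A \to C$, $\alpha: B \to B$, $\beta: C \to B$, $\delta: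 C \to C$, $s: X \to B$, $t: X \to C$. A map $G: B \otimes A \to C$ is a conditional of $F: A \to B \otimes C$ if $(\mathsf{Id}_B \otimes G) \circ (\mathsf{copy}_B \otimes \mathsf{Id}_A) \circ (\mathsf{Id}_B \otimes \mathsf{del}_C \otimes \mathsf{Id}_A) \circ (F \otimes \mathsf{Id}_A) \circ \mathsf{copy}_A = F$; a Markov category with conditionals is one in which every map $A \to B \otimes C$ has a conditional. *)

From mathcomp Require Import all_boot all_algebra.
Set Implicit Arguments. Unset Strict Implicit. Unset Printing Implicit Defensive.
Import GRing.Theory.
Local Open Scope ring_scope.

(** A dagger additive category: a dagger category enriched in abelian groups
    (hom-sets are zmodTypes, composition bilinear), with an additive dagger,
    a zero object and binary biproducts satisfying pi_j^dagger = iota_j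
    (binary biproducts + zero object = all finite biproducts). *)
Record DagAddCat := DagAddCat_ {
  Ob :> Type;
  Hom : Ob -> Ob -> zmodType;
  comp : forall A B C : Ob, Hom B C -> Hom A B -> Hom A C;
  idm : forall A : Ob, Hom A A;
  dag : forall A B : Ob, Hom A B -> Hom B A;
  zeroOb : Ob;
  bip : Ob -> Ob -> Ob;
  pi1 : forall A B : Ob, Hom (bip A B) A;
  pi2 : forall A B : Ob, Hom (bip A B) B;
  iota1 : forall A B : Ob, Hom A (bip A B);
  iota2 : forall A B : Ob, Hom B (bip A B);
  comp_assoc : forall (A B C D : Ob) (h : Hom C D) (g : Hom B C) (f : Hom A B),
      comp h (comp g f) = comp (comp h g) f;
  comp_idl : forall (A B : Ob) (f : Hom A B), comp (idm B) f = f;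
  comp_idr : forall (A B : Ob) (f : Hom A B), comp f (idm A) = f;
  comp_addl : forall (A B C : Ob) (g1 g2 : Hom B C) (f : Hom A B),
      comp (g1 + g2) f = comp g1 f + comp g2 f;
  comp_addr : forall (A B C : Ob) (g : Hom B C) (f1 f2 : Hom A B),
      comp g (f1 + f2) = comp g f1 + comp g f2;
  dag_invol : forall (A B : Ob) (f : Hom A B), dag (dag f) = f;
  dag_comp : forall (A B C : Ob) (g : Hom B C) (f : Hom A B),
      dag (comp g f) = comp (dag f) (dag g);
  dag_id : forall A : Ob, dag (idm A) = idm A;
  dag_add : forall (A B : Ob) (f g : Hom A B), dag (f + g) = dag f + dag g;
  zero_to : forall (A : Ob) (f : Hom A zeroOb), f = 0;
  zero_from : forall (A : Ob) (f : Hom zeroOb A), f = 0;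
  bip_11 : forall A B : Ob, comp (pi1 A B) (iota1 A B) = idm A;
  bip_22 : forall A B : Ob, comp (pi2 A B) (iota2 A B) = idm B;
  bip_12 : forall A B : Ob, comp (pi1 A B) (iota2 A B) = 0;
  bip_21 : forall A B : Ob, comp (pi2 A B) (iota1 A B) = 0;
  bip_sum : forall A B : Ob,
      comp (iota1 A B) (pi1 A B) + comp (iota2 A B) (pi2 A B) = idm (bip A B);
  dag_pi1 : forall A B : Ob, dag (pi1 A B) = iota1 A B;
  dag_pi2 : forall A B : Ob, dag (pi2 A B) = iota2 A B
}.

Arguments Hom {_}.
Arguments comp {_ A B C}.
Arguments idm {_}.
Arguments dag {_ A B}.
Arguments zeroOb {_}.
Arguments bip {_}.
Arguments pi1 {_}.
Arguments pi2 {_}.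
Arguments iota1 {_}.
Arguments iota2 {_}.

Section Gauss.
Variable XX : DagAddCat.

Local Notation "g \oo f" := (comp g f) (at level 40, left associativity).

Definition isMPinv (A B : XX) (f : Hom A B) (fo : Hom B A) : Prop :=
  [/\ f \oo fo \oo f = f, fo \oo f \oo fo = fo,
      dag (f \oo fo) = f \oo fo & dag (fo \oo f) = fo \oo f].

Definition isMoorePenrose : Prop :=
  forall (A B : XX) (f : Hom A B), exists fo : Hom B A, isMPinv f fo.

Definition dag_positive (B : XX) (p : Hom B B) : Prop :=
  exists (D : XX) (phi : Hom B D), p = dag phi \oo phi.

Definition col2 (Y B C : XX) (x : Hom Y B) (y : Hom Y C) : Hom Y (bip B C) :=
  iota1 B C \oo x + iota2 B C \oo y.
Definition row2 (B A C : XX) (h : Hom B C) (k : Hom A C) : Hom (bip B A) C :=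
  h \oo pi1 B A + k \oo pi2 B A.
Definition dsum (A A' B B' : XX) (f : Hom A B) (g : Hom A' B') :
    Hom (bip A A') (bip B B') :=
  iota1 B B' \oo f \oo pi1 A A' + iota2 B B' \oo g \oo pi2 A A'.
Definition mat22 (B C : XX) (a : Hom B B) (b : Hom C B) (c : Hom B C) (d : Hom C C) :
    Hom (bip B C) (bip B C) :=
  iota1 B C \oo a \oo pi1 B C + iota1 B C \oo b \oo pi2 B C
  + iota2 B C \oo c \oo pi1 B C + iota2 B C \oo d \oo pi2 B C.

Variable X : XX.

(** Maps of the Gauss construction G[(XX,dag)]_X : triples (f, p, x);
    the positivity requirement on p is the predicate [gpos]. *)
Record gmap (A B : XX) := GMap { gf : Hom A B; gp : Hom B B; gx : Hom X B }.

Definition gpos (A B : XX) (F : gmap A B) : Prop := dag_positive (gp F).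

Definition gId (A : XX) : gmap A A := GMap (idm A) 0 0.

Definition gcomp (A B C : XX) (G : gmap B C) (F : gmap A B) : gmap A C :=
  GMap (gf G \oo gf F) (gp G + gf G \oo gp F \oo dag (gf G)) (gx G + gf G \oo gx F).

Definition gtensor (A A' B B' : XX) (F : gmap A B) (G : gmap A' B') :
    gmap (bip A A') (bip B B') :=
  GMap (dsum (gf F) (gf G)) (dsum (gp F) (gp G)) (col2 (gx F) (gx G)).

Definition gcopy (A : XX) : gmap A (bip A A) := GMap (col2 (idm A) (idm A)) 0 0.
Definition gdel (A : XX) : gmap A zeroOb := GMap 0 0 0.

(** Structural isomorphisms (deterministic maps) of the monoidal structure
    that are suppressed in the informal string-diagram equation. *)
Definition gdet (A B : XX) (f : Hom A B) : gmap A B := GMap f 0 0.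
Definition grunit (B : XX) : gmap (bip B zeroOb) B := gdet (pi1 B zeroOb).
Definition gassoc (B B' A : XX) : gmap (bip (bip B B') A) (bip B (bip B' A)) :=
  gdet (iota1 B (bip B' A) \oo pi1 B B' \oo pi1 (bip B B') A
        + iota2 B (bip B' A) \oo (iota1 B' A \oo pi2 B B' \oo pi1 (bip B B') A
                                 + iota2 B' A \oo pi2 (bip B B') A)).

Definition is_conditional (A B C : XX) (F : gmap A (bip B C)) (G : gmap (bip B A) C)
    : Prop :=
  gpos G /\
  gcomp (gtensor (gId B) G)
   (gcomp (gassoc B B A)
    (gcomp (gtensor (gcopy B) (gId A))
     (gcomp (gtensor (grunit B) (gId A))
      (gcomp (gtensor (gtensor (gId B) (gdel C)) (gId A))
       (gcomp (gtensor F (gId A)) (gcopy A)))))) = F.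

Definition has_conditionals : Prop :=
  forall (A B C : XX) (F : gmap A (bip B C)), gpos F ->
    exists G : gmap (bip B A) C, is_conditional F G.

Definition Fblock (A B C : XX) (f : Hom A B) (g : Hom A C) (alpha : Hom B B)
  (beta : Hom C B) (delta : Hom C C) (s : Hom X B) (t : Hom X C) : gmap A (bip B C) :=
  GMap (col2 f g) (mat22 alpha beta (dag beta) delta) (col2 s t).

Definition Fcond (A B C : XX) (f : Hom A B) (g : Hom A C) (alpha alpha_o : Hom B B)
  (beta : Hom C B) (delta : Hom C C) (s : Hom X B) (t : Hom X C) : gmap (bip B A) C :=
  GMap (row2 (dag beta \oo alpha_o) (g - dag beta \oo alpha_o \oo f))
       (delta - dag beta \oo alpha_o \oo beta)
       (t - dag beta \oo alpha_o \oo s).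

End Gauss.

Arguments gmap {XX} X A B.

(* Running the string diagram with F = (h, p, x) and a candidate G = ([k l], q, y)
   yields (tau h + iota2 l, tau p tau^dag + iota2 q pi2, tau x + iota2 y), where
   tau = [pi1; k pi1].  With k = beta^dag alpha^o, l = g - k f and y = t - k s
   this gives back [f; g] and [s; t].  For the covariance write the positive
   block matrix as phi^dag phi, so alpha = a^dag a, beta = a^dag b and
   delta = b^dag b.  Moore-Penrose inverses give a alpha^o alpha = a (the error
   e = a - a alpha^o alpha has a^dag e = 0, hence e^dag e = 0, hence e = 0); this
   yields alpha alpha^o^dag beta = beta and beta^dag alpha^o alpha = beta^dag,
   which make tau p tau^dag + iota2 q pi2 equal to p, and exhibits the Schur
   complement q = delta - beta^dag alpha^o beta as c^dag c for
   c = b - a alpha^o beta.  Every positive F has this block form, positive maps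
   being self-adjoint. *)

From Pilot Require Import Defs.
From mathcomp Require Import ssreflect ssrfun ssrbool ssralg.
Set Implicit Arguments. Unset Strict Implicit. Unset Printing Implicit Defensive.
Import GRing.Theory.
Local Open Scope ring_scope.

Local Notation "g \oo f" := (Defs.comp g f) (at level 40, left associativity).

Section DaggerAdditive.
Variable XX : DagAddCat.
Implicit Types A B C D Y Z : XX.

Lemma comp0l A B C (f : Hom A B) : (0 : Hom B C) \oo f = 0.
Proof. by apply: (addrI ((0 : Hom B C) \oo f)); rewrite -comp_addl !addr0. Qed.

Lemma comp0r A B C (g : Hom B C) : g \oo (0 : Hom A B) = 0.
Proof. by apply: (addrI (g \oo (0 : Hom A B))); rewrite -comp_addr !addr0. Qed.

Lemma compNl A B C (g : Hom B C) (f : Hom A B) : (- g) \oo f = - (g \oo f).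
Proof. by apply: (addrI (g \oo f)); rewrite -comp_addl !subrr comp0l. Qed.

Lemma compNr A B C (g : Hom B C) (f : Hom A B) : g \oo (- f) = - (g \oo f).
Proof. by apply: (addrI (g \oo f)); rewrite -comp_addr !subrr comp0r. Qed.

Lemma dag0 A B : dag (0 : Hom A B) = 0.
Proof. by apply: (addrI (dag (0 : Hom A B))); rewrite -dag_add !addr0. Qed.

Lemma dagN A B (f : Hom A B) : dag (- f) = - dag f.
Proof. by apply: (addrI (dag f)); rewrite -dag_add !subrr dag0. Qed.

Lemma comp_conj A B C (a : Hom B C) (b : Hom A B) (m : Hom A A) :
  a \oo (b \oo m \oo dag b) \oo dag a = a \oo b \oo m \oo dag (a \oo b).
Proof. by rewrite dag_comp !comp_assoc. Qed.

Lemma dag_positive_selfadj B (p : Hom B B) : dag_positive p -> dag p = p.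
Proof. by case=> D [phi ->]; rewrite dag_comp dag_invol. Qed.

Lemma dag_iota1 A B : dag (iota1 A B) = pi1 A B.
Proof. by rewrite -dag_pi1 dag_invol. Qed.

Lemma dag_iota2 A B : dag (iota2 A B) = pi2 A B.
Proof. by rewrite -dag_pi2 dag_invol. Qed.

Lemma pi1_iota1_comp A B Y (r : Hom Y A) : pi1 A B \oo (iota1 A B \oo r) = r.
Proof. by rewrite comp_assoc bip_11 comp_idl. Qed.

Lemma pi2_iota2_comp A B Y (r : Hom Y B) : pi2 A B \oo (iota2 A B \oo r) = r.
Proof. by rewrite comp_assoc bip_22 comp_idl. Qed.

Lemma pi1_iota2_comp A B Y (r : Hom Y B) : pi1 A B \oo (iota2 A B \oo r) = 0.
Proof. by rewrite comp_assoc bip_12 comp0l. Qed.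

Lemma pi2_iota1_comp A B Y (r : Hom Y A) : pi2 A B \oo (iota1 A B \oo r) = 0.
Proof. by rewrite comp_assoc bip_21 comp0l. Qed.

Lemma bip_ext A B Y (h k : Hom Y (bip A B)) :
  pi1 A B \oo h = pi1 A B \oo k -> pi2 A B \oo h = pi2 A B \oo k -> h = k.
Proof.
move=> e1 e2; rewrite -(comp_idl h) -(comp_idl k) -bip_sum !comp_addl.
by rewrite -!comp_assoc e1 e2.
Qed.

Lemma bip_coext A B Y (h k : Hom (bip A B) Y) :
  h \oo iota1 A B = k \oo iota1 A B -> h \oo iota2 A B = k \oo iota2 A B -> h = k.
Proof.
move=> e1 e2; rewrite -(comp_idr h) -(comp_idr k) -bip_sum !comp_addr.
by rewrite !comp_assoc e1 e2.
Qed.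

Lemma bip_mat_ext A B A' B' (h k : Hom (bip A B) (bip A' B')) :
  pi1 A' B' \oo (h \oo iota1 A B) = pi1 A' B' \oo (k \oo iota1 A B) ->
  pi1 A' B' \oo (h \oo iota2 A B) = pi1 A' B' \oo (k \oo iota2 A B) ->
  pi2 A' B' \oo (h \oo iota1 A B) = pi2 A' B' \oo (k \oo iota1 A B) ->
  pi2 A' B' \oo (h \oo iota2 A B) = pi2 A' B' \oo (k \oo iota2 A B) -> h = k.
Proof. by move=> e11 e12 e21 e22; apply: bip_coext; apply: bip_ext. Qed.

End DaggerAdditive.

Ltac bip_norm :=
  rewrite /col2 /row2 /dsum /mat22;
  repeat progress rewrite ?comp_addl ?comp_addr -?comp_assoc
    ?dag_add ?dag_comp ?dagN ?dag0 ?dag_pi1 ?dag_pi2 ?dag_iota1 ?dag_iota2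
    ?dag_invol ?dag_id ?pi1_iota1_comp ?pi2_iota2_comp ?pi1_iota2_comp
    ?pi2_iota1_comp ?bip_11 ?bip_12 ?bip_21 ?bip_22 ?comp0l ?comp0r
    ?compNl ?compNr ?comp_idl ?comp_idr ?addr0 ?add0r ?oppr0.

Section BlockMatrices.
Variable XX : DagAddCat.
Implicit Types A B C D Y Z : XX.

Lemma pi1_col2 A B Y (x : Hom Y A) (y : Hom Y B) : pi1 A B \oo col2 x y = x.
Proof. by bip_norm. Qed.

Lemma col2_comp A B Y Z (x : Hom Y A) (y : Hom Y B) (r : Hom Z Y) :
  col2 x y \oo r = col2 (x \oo r) (y \oo r).
Proof. by apply: bip_ext; bip_norm. Qed.

Lemma col2_eta A B Y (h : Hom Y (bip A B)) : col2 (pi1 A B \oo h) (pi2 A B \oo h) = h.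
Proof. by apply: bip_ext; bip_norm. Qed.

Lemma dsum_col2 A A' B B' Y (f : Hom A B) (g : Hom A' B') (x : Hom Y A) (y : Hom Y A') :
  dsum f g \oo col2 x y = col2 (f \oo x) (g \oo y).
Proof. by apply: bip_ext; bip_norm. Qed.

Lemma col3_eta B C A :
  col2 (col2 (pi1 B C \oo pi1 (bip B C) A) (pi2 B C \oo pi1 (bip B C) A))
       (pi2 (bip B C) A) = idm (bip (bip B C) A).
Proof. by apply: bip_ext; bip_norm; rewrite ?comp_assoc -?comp_addl ?bip_sum ?comp_idl. Qed.

Lemma mat22_eta B C (p : Hom (bip B C) (bip B C)) : dag p = p ->
  mat22 (pi1 B C \oo (p \oo iota1 B C)) (pi1 B C \oo (p \oo iota2 B C))
        (dag (pi1 B C \oo (p \oo iota2 B C))) (pi2 B C \oo (p \oo iota2 B C)) = p.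
Proof.
move=> p_sa; rewrite !dag_comp p_sa dag_pi1 dag_iota2.
by apply: bip_mat_ext; bip_norm.
Qed.

(* Stated with [dag (iota1 _ _)] so that [comp_conj] applies. *)
Lemma dsum_f0 A B A' B' (f : Hom A B) :
  dsum f (0 : Hom A' B') = iota1 B B' \oo f \oo dag (iota1 A A').
Proof. by bip_norm. Qed.

Lemma dsum_0f A B A' B' (f : Hom A' B') :
  dsum (0 : Hom A B) f = iota2 B B' \oo f \oo pi2 A A'.
Proof. by bip_norm. Qed.

End BlockMatrices.

Section MoorePenrose.
Variable XX : DagAddCat.
Hypothesis MP : isMoorePenrose XX.
Implicit Types A B C D Y Z : XX.

Lemma mpinv_dag_comp_eq0 A B (x : Hom A B) (xo : Hom B A) :
  isMPinv x xo -> dag x \oo x = 0 -> x = 0.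
Proof.
case=> x_xo_x _ x_xo_sa _ xx0.
by rewrite -x_xo_x -x_xo_sa dag_comp -comp_assoc xx0 comp0r.
Qed.

Lemma gram_mpinvK B D (a : Hom B D) (ao : Hom B B) :
  isMPinv (dag a \oo a) ao -> a \oo (ao \oo (dag a \oo a)) = a.
Proof.
set al := dag a \oo a; case=> al_ao_al _ _ _; set e := a - a \oo (ao \oo al).
have a_e : dag a \oo e = 0.
  by rewrite /e comp_addr compNr (comp_assoc (dag a) a) comp_assoc al_ao_al subrr.
have e_e : dag e \oo e = 0.
  rewrite {1}/e dag_add dagN !dag_comp comp_addl compNl a_e.
  by rewrite -!comp_assoc a_e !comp0r subr0.
have [eo mp_e] := MP e.
by apply/esym/subr0_eq; apply: mpinv_dag_comp_eq0 mp_e e_e.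
Qed.

Lemma gram_schur B C D (a : Hom B D) (b : Hom C D) (alpha ao : Hom B B) (beta : Hom C B) :
  alpha = dag a \oo a -> beta = dag a \oo b -> isMPinv alpha ao ->
  [/\ alpha \oo (dag ao \oo beta) = beta,
      dag beta \oo (ao \oo alpha) = dag beta &
      dag b \oo b - dag beta \oo ao \oo beta =
      dag (b - a \oo (ao \oo beta)) \oo (b - a \oo (ao \oo beta))].
Proof.
move=> alphaE betaE mp.
have a_ao_alpha : a \oo (ao \oo alpha) = a by rewrite alphaE gram_mpinvK // -alphaE.
have alpha_sa : dag alpha = alpha by rewrite alphaE dag_comp dag_invol.
have alpha_aod_ad : alpha \oo (dag ao \oo dag a) = dag a.
  by rewrite -{2}a_ao_alpha !dag_comp alpha_sa comp_assoc.
have alpha_ao_ad : alpha \oo (ao \oo dag a) = dag a.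
  case: mp => alpha_ao_alpha _ _ _.
  by rewrite -{1}alpha_aod_ad (comp_assoc ao) !comp_assoc alpha_ao_alpha -comp_assoc.
have betaD : dag beta = dag b \oo a by rewrite betaE dag_comp dag_invol.
split.
- by rewrite betaE (comp_assoc (dag ao)) comp_assoc alpha_aod_ad.
- by rewrite betaD -comp_assoc a_ao_alpha.
set c := b - a \oo (ao \oo beta).
have ad_c : dag a \oo c = 0.
  rewrite /c comp_addr compNr (comp_assoc (dag a) a) -alphaE.
  by rewrite betaE (comp_assoc ao) comp_assoc alpha_ao_ad subrr.
rewrite {1}/c dag_add dagN comp_addl compNl !dag_comp -!comp_assoc ad_c !comp0r subr0.
by rewrite /c comp_addr compNr betaD -comp_assoc.
Qed.

Lemma mat22_gram B C D (alpha : Hom B B) (beta : Hom C B) (gamma : Hom B C)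
    (delta : Hom C C) (phi : Hom (bip B C) D) :
  mat22 alpha beta gamma delta = dag phi \oo phi ->
  [/\ alpha = dag (phi \oo iota1 B C) \oo (phi \oo iota1 B C),
      beta = dag (phi \oo iota1 B C) \oo (phi \oo iota2 B C) &
      delta = dag (phi \oo iota2 B C) \oo (phi \oo iota2 B C)].
Proof.
set M := mat22 alpha beta gamma delta => E.
have entry11 : alpha = pi1 B C \oo (M \oo iota1 B C) by rewrite /M; bip_norm.
have entry12 : beta = pi1 B C \oo (M \oo iota2 B C) by rewrite /M; bip_norm.
have entry22 : delta = pi2 B C \oo (M \oo iota2 B C) by rewrite /M; bip_norm.
by split; [rewrite entry11 | rewrite entry12 | rewrite entry22];
  rewrite E !dag_comp ?dag_iota1 ?dag_iota2 !comp_assoc.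
Qed.

Lemma dag_positive_mat22_schur B C D (alpha ao : Hom B B) (beta : Hom C B)
    (delta : Hom C C) (phi : Hom (bip B C) D) :
  isMPinv alpha ao -> mat22 alpha beta (dag beta) delta = dag phi \oo phi ->
  [/\ alpha \oo (dag ao \oo beta) = beta,
      dag beta \oo (ao \oo alpha) = dag beta &
      dag_positive (delta - dag beta \oo ao \oo beta)].
Proof.
move=> mp /mat22_gram[alphaE betaE ->].
have [? ? schur] := gram_schur alphaE betaE mp.
split=> //; rewrite schur.
by exists D, (phi \oo iota2 B C - phi \oo iota1 B C \oo (ao \oo beta)).
Qed.

End MoorePenrose.

Section GaussCalculus.
Variables (XX : DagAddCat) (X : XX).
Implicit Types A B C D Y Z : XX.

Lemma gcomp_detl A B C (g : Hom B C) (H : gmap X A B) :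
  gcomp (gdet X g) H = GMap (g \oo gf H) (g \oo gp H \oo dag g) (g \oo gx H).
Proof. by rewrite /gcomp /= !add0r. Qed.

Lemma gcomp_detr A B C (f : Hom A B) (H : gmap X B C) :
  gcomp H (gdet X f) = GMap (gf H \oo f) (gp H) (gx H).
Proof. by rewrite /gcomp /= !comp0r ?comp0l !addr0. Qed.

Lemma gcomp_detA A B C D (g : Hom C D) (f : Hom B C) (H : gmap X A B) :
  gcomp (gdet X g) (gcomp (gdet X f) H) = gcomp (gdet X (g \oo f)) H.
Proof. by rewrite !gcomp_detl /= dag_comp !comp_assoc. Qed.

Lemma gtensor_det A A' B B' (f : Hom A B) (g : Hom A' B') :
  gtensor (gdet X f) (gdet X g) = gdet X (dsum f g).
Proof. by rewrite /gtensor /gdet /=; congr GMap; bip_norm. Qed.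

Lemma gassoc_col2 B B' A Y (a : Hom Y B) (b : Hom Y B') (c : Hom Y A) :
  gf (gassoc X B B' A) \oo col2 (col2 a b) c = col2 a (col2 b c).
Proof. by apply: bip_ext; bip_norm. Qed.

Definition copy_first B C A : Hom (bip (bip B C) A) (bip B (bip B A)) :=
  col2 (pi1 B C \oo pi1 (bip B C) A)
       (col2 (pi1 B C \oo pi1 (bip B C) A) (pi2 (bip B C) A)).

Lemma gcomp_copy_first A B C D (H : gmap X D (bip (bip B C) A)) :
  gcomp (gassoc X B B A)
   (gcomp (gtensor (gcopy X B) (gId X A))
    (gcomp (gtensor (grunit X B) (gId X A))
     (gcomp (gtensor (gtensor (gId X B) (gdel X C)) (gId X A)) H))) =
  gcomp (gdet X (copy_first B C A)) H.
Proof.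
rewrite -[gassoc X B B A]/(gdet X (gf (gassoc X B B A))).
rewrite !gtensor_det !gcomp_detA; congr (gcomp (gdet X _) H).
rewrite -[LHS]comp_idr -col3_eta -!comp_assoc !dsum_col2 !comp_idl comp0l.
rewrite pi1_col2 col2_comp !comp_idl; exact: gassoc_col2.
Qed.

Definition recompose A B C (F : gmap X A (bip B C)) (G : gmap X (bip B A) C) :
    gmap X A (bip B C) :=
  gcomp (gtensor (gId X B) G)
   (gcomp (gassoc X B B A)
    (gcomp (gtensor (gcopy X B) (gId X A))
     (gcomp (gtensor (grunit X B) (gId X A))
      (gcomp (gtensor (gtensor (gId X B) (gdel X C)) (gId X A))
       (gcomp (gtensor F (gId X A)) (gcopy X A)))))).

Lemma dsum_row2_copy_first_iota1 A B C (k : Hom B C) (l : Hom A C) :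
  dsum (idm B) (row2 k l) \oo copy_first B C A \oo iota1 (bip B C) A =
  col2 (pi1 B C) (k \oo pi1 B C).
Proof. by apply: bip_ext; bip_norm. Qed.

Lemma recomposeE A B C (F : gmap X A (bip B C)) (k : Hom B C) (l : Hom A C)
    (q : Hom C C) (y : Hom X C) :
  let tau := col2 (pi1 B C) (k \oo pi1 B C) in
  recompose F (GMap (row2 k l) q y) =
  GMap (tau \oo gf F + iota2 B C \oo l)
       (tau \oo gp F \oo dag tau + iota2 B C \oo q \oo pi2 B C)
       (tau \oo gx F + iota2 B C \oo y).
Proof.
case: F => h p x tau; rewrite /recompose.
rewrite gcomp_copy_first gcomp_detr gcomp_detl /gcomp /gtensor /=.
congr GMap.
- by apply: bip_ext; rewrite /copy_first; bip_norm.
- by rewrite comp_conj dsum_f0 comp_conj dsum_row2_copy_first_iota1 dsum_0f addrC.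
- by apply: bip_ext; rewrite /copy_first; bip_norm; rewrite // addrC.
Qed.

End GaussCalculus.

Section Conditionals.
Variables (XX : DagAddCat) (X : XX).
Hypothesis MP : isMoorePenrose XX.
Implicit Types A B C D Y Z : XX.

Lemma Fcond_is_conditional A B C (f : Hom A B) (g : Hom A C) (alpha ao : Hom B B)
    (beta : Hom C B) (delta : Hom C C) (s : Hom X B) (t : Hom X C) :
  isMPinv alpha ao -> gpos (Fblock f g alpha beta delta s t) ->
  is_conditional (Fblock f g alpha beta delta s t) (Fcond f g alpha ao beta delta s t).
Proof.
move=> mp [D [phi /= pE]].
have [alpha_aod_beta beta_ao_alpha schur_pos] := dag_positive_mat22_schur MP mp pE.
split; first exact: schur_pos.
set F := Fblock f g alpha beta delta s t.
change (recompose F (Fcond f g alpha ao beta delta s t) = F).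
rewrite recomposeE /=; congr GMap.
- by apply: bip_ext; bip_norm; rewrite // addrC subrK.
- apply: bip_mat_ext; bip_norm;
    by rewrite ?alpha_aod_beta ?beta_ao_alpha // addrC subrK.
- by apply: bip_ext; bip_norm; rewrite // addrC subrK.
Qed.

Lemma gmap_Fblock_eta A B C (F : gmap X A (bip B C)) : dag (gp F) = gp F ->
  F = Fblock (pi1 B C \oo gf F) (pi2 B C \oo gf F)
             (pi1 B C \oo (gp F \oo iota1 B C)) (pi1 B C \oo (gp F \oo iota2 B C))
             (pi2 B C \oo (gp F \oo iota2 B C)) (pi1 B C \oo gx F) (pi2 B C \oo gx F).
Proof. by case: F => h p x /= p_sa; rewrite /Fblock !col2_eta mat22_eta. Qed.

Lemma MoorePenrose_has_conditionals : has_conditionals X.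
Proof.
move=> A B C F F_pos; have F_eta := gmap_Fblock_eta (dag_positive_selfadj F_pos).
have [ao mp] := MP (pi1 B C \oo (gp F \oo iota1 B C)).
rewrite F_eta in F_pos; rewrite F_eta.
by eexists; apply: Fcond_is_conditional mp F_pos.
Qed.

End Conditionals.

Theorem mainTheorem11 (XX : DagAddCat) (X : XX) :
  isMoorePenrose XX ->
  has_conditionals X /\
  (forall (A B C : XX) (f : Hom A B) (g : Hom A C) (alpha alpha_o : Hom B B)
          (beta : Hom C B) (delta : Hom C C) (s : Hom X B) (t : Hom X C),
     isMPinv alpha alpha_o ->
     gpos (Fblock f g alpha beta delta s t) ->
     is_conditional (Fblock f g alpha beta delta s t)
                    (Fcond f g alpha alpha_o beta delta s t)).
Proof.
move=> MP; split; first exact: MoorePenrose_has_conditionals.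
by move=> A B C f g alpha ao beta delta s t; apply: Fcond_is_conditional.
Qed.
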